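(* Let $R$ be a locally bounded $K$-category, $X\in\mathrm{Mod}(R)$, $M\in\mathrm{mod}(R)$, and $C$ a full subcategory of $R$ with $\mathrm{supp}(M)\subseteq C$. Let $D$ be the full subcategory of $R$ whose objects are those $x$ with $R(c,x)\neq 0$ for some object $c$ of $C$. If $h:\mathrm{res}_D(X)\to \mathrm{res}_D(M)$ is a homomorphism of $D$-modules, then the family $h^{[0]}=(h^{[0]}_a:X(a)\to M(a))_{a\in \mathrm{ob}(R)}$ defined by $h^{[0]}_a=h_a$ if $a\in\mathrm{supp}(M)$ and $h^{[0]}_a=0$ otherwise is an $R$-module homomorphism $X\to M$.
   Context: A $K$-category ($K$ an algebraically closed field) is locally bounded if distinct objects are non-isomorphic, endomorphism algebras of objects are local, and for each object $x$, $\sum_y\dim_K R(x,y)<\infty$ and $\sum_y\dim_K R(y,x)<\infty$. An $R$-module is a $K$-linear functor $R^{op}\to\mathrm{Mod}(K)$; $\mathrm{Mod}(R)$ is the category of $R$-modules $X$ with $\dim_K X(x)<\infty$ for all $x$, and $\mathrm{mod}(R)$ those with $\sum_x\dim_K M(x)<\infty$. $\mathrm{supp}(M)$ is the full subcategory of objects $x$ with $M(x)\neq 0$. For a full subcategory $D$, $\mathrm{res}_D$ denotes restriction of modules to $D$. *)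

From HB Require Import structures.
From mathcomp Require Import all_boot all_order all_algebra.
From Stdlib Require Import ClassicalEpsilon.
From Stdlib Require List.
Set Implicit Arguments. Unset Strict Implicit. Unset Printing Implicit Defensive.
Import GRing.Theory.
Local Open Scope ring_scope.

(* A K-category.  [khom x y] = R(x,y) is the space of morphisms x -> y;
   [kcomp g f] = g o f for f : x -> y, g : y -> z.  (Hom spaces are given as
   finite-dimensional K-spaces; this is harmless since in a locally bounded
   category all khom spaces are finite-dimensional.) *)
Record KCat (K : fieldType) := {
  cobj : Type;
  khom : cobj -> cobj -> vectType K;
  kcomp : forall x y z, khom y z -> khom x y -> khom x z;
  kid : forall x, khom x x;
  comp_linl : forall x y z (f : khom x y) (a : K) (g1 g2 : khom y z),
      kcomp (a *: g1 + g2) f = a *: kcomp g1 f + kcomp g2 f;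
  comp_linr : forall x y z (g : khom y z) (a : K) (f1 f2 : khom x y),
      kcomp g (a *: f1 + f2) = a *: kcomp g f1 + kcomp g f2;
  comp_assoc : forall x y z w (f : khom x y) (g : khom y z) (h : khom z w),
      kcomp h (kcomp g f) = kcomp (kcomp h g) f;
  comp_idl : forall x y (f : khom x y), kcomp (kid y) f = f;
  comp_idr : forall x y (f : khom x y), kcomp f (kid x) = f
}.

Arguments cobj {K}.
Arguments khom {K} _ _ _.
Arguments kcomp {K} _ {x y z}.
Arguments kid {K} _ x.

Section Cat.
Variable K : fieldType.
Variable R : KCat K.

Definition is_iso (x y : cobj R) (f : khom R x y) :=
  exists g : khom R y x, kcomp R g f = kid R x /\ kcomp R f g = kid R y.

Definition local_end (x : cobj R) :=
  kid R x <> 0 /\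
  forall f g : khom R x x, ~ is_iso f -> ~ is_iso g -> ~ is_iso (f + g).

Definition locally_bounded :=
  [/\ (forall x y : cobj R, x <> y -> ~ exists f : khom R x y, is_iso f),
      (forall x : cobj R, local_end x),
      (forall x : cobj R, exists s : seq (cobj R),
          forall y, (exists f : khom R x y, f != 0) -> List.In y s) &
      (forall x : cobj R, exists s : seq (cobj R),
          forall y, (exists f : khom R y x, f != 0) -> List.In y s)].
End Cat.

(* An R-module X in Mod(R): a K-linear functor R^op -> mod K;
   for f : x -> y, [mact X f] : X(y) -> X(x). *)
Record RMod (K : fieldType) (R : KCat K) := {
  mob : cobj R -> vectType K;
  mact : forall x y, khom R x y -> 'Hom(mob y, mob x);
  mact_lin : forall x y (a : K) (f g : khom R x y),
      mact (a *: f + g) = a *: mact f + mact g;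
  mact_id : forall x, mact (kid R x) = \1%VF;
  mact_comp : forall x y z (f : khom R x y) (g : khom R y z),
      mact (kcomp R g f) = (mact f \o mact g)%VF
}.
Arguments mob {K R}.
Arguments mact {K R} _ {x y}.

Section Mods.
Variable K : fieldType.
Variable R : KCat K.

Definition supp (M : RMod R) (x : cobj R) : Prop := exists v : mob M x, v != 0.

(* M belongs to mod(R): sum_x dim M(x) < oo, i.e. finite support *)
Definition in_modR (M : RMod R) : Prop :=
  exists s : seq (cobj R), forall x, supp M x -> List.In x s.

Definition is_hom (X M : RMod R) (h : forall a, 'Hom(mob X a, mob M a)) :=
  forall x y (f : khom R x y), (mact M f \o h y)%VF = (h x \o mact X f)%VF.

Definition fullsub (P : cobj R -> Prop) : KCat K.
Proof.
refine {| cobj := {x : cobj R | P x};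
          khom := fun a b => khom R (proj1_sig a) (proj1_sig b);
          kcomp := fun a b c g f => kcomp R g f;
          kid := fun a => kid R (proj1_sig a) |}.
- by move=> *; apply: comp_linl.
- by move=> *; apply: comp_linr.
- by move=> *; apply: comp_assoc.
- by move=> *; apply: comp_idl.
- by move=> *; apply: comp_idr.
Defined.

Definition res (P : cobj R -> Prop) (X : RMod R) : RMod (fullsub P).
Proof.
refine {| mob := fun a : cobj (fullsub P) => mob X (proj1_sig a);
          mact := fun a b (f : khom (fullsub P) a b) => @mact _ _ X _ _ f |}.
- by move=> *; apply: mact_lin.
- by move=> *; apply: mact_id.
- by move=> *; apply: mact_comp.
Defined.

Definition ext0 (P S : cobj R -> Prop) (X M : RMod R)
  (h : forall a : cobj (fullsub P), 'Hom(mob (res P X) a, mob (res P M) a))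
  (a : cobj R) : 'Hom(mob X a, mob M a) :=
  match excluded_middle_informative (P a /\ S a) with
  | left p => h (exist P a (proj1 p))
  | right _ => 0
  end.
End Mods.

From mathcomp Require Import all_boot all_order all_algebra.
From Stdlib Require Import ClassicalEpsilon Classical.
Import GRing.Theory.

Set Implicit Arguments.
Unset Strict Implicit.
Unset Printing Implicit Defensive.

(* Naturality of h^[0] along f : x -> y is checked by cases.  If M(x) = 0 both
   sides land in the zero space.  If x and y both lie in supp(M) it is the
   naturality of h.  If x lies in supp(M) but y does not, the left side is 0;
   for f = 0 so is the right side, and for f <> 0 the object y lies in D, so
   the naturality of h at f gives h_x X(f) = M(f) h_y, which is 0 as M(y) = 0. *)

Lemma lfun_into_zero (K : fieldType) (U V : vectType K) (g : 'Hom(U, V)) :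
  (forall v : V, v = 0%R) -> g = 0%R.
Proof. by move=> V0; apply/lfunP => u; rewrite zero_lfunE; apply: V0. Qed.

Section ModuleFacts.
Variables (K : fieldType) (R : KCat K).

Lemma nsupp_vec0 (M : RMod R) x : ~ supp M x -> forall v : mob M x, v = 0%R.
Proof. by move=> nSx v; have [// | nz_v] := eqVneq v 0%R; case: nSx; exists v. Qed.

Lemma mact0 (X : RMod R) x y : @mact _ _ X x y 0%R = 0%R.
Proof.
have := @mact_lin _ _ X x y (-1)%R 0%R 0%R.
by rewrite scaler0 add0r scaleN1r addNr.
Qed.

End ModuleFacts.

Section ExtensionByZero.
Variables (K : fieldType) (R : KCat K) (X M : RMod R) (P : cobj R -> Prop).
Variable h : forall a : cobj (fullsub P), 'Hom(mob (res P X) a, mob (res P M) a).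

Hypothesis supp_sub : forall x, supp M x -> P x.
Hypothesis P_closed : forall x y (f : khom R x y), supp M x -> f != 0%R -> P y.
Hypothesis hom_h : is_hom h.

Local Notation h0 := (ext0 (supp M) h).

Lemma ext0_supp a (Pa : P a) : supp M a -> h0 a = h (exist P a Pa).
Proof.
rewrite /ext0; case: excluded_middle_informative => [PSa | nPSa] Sa.
  by rewrite (proof_irrelevance _ (proj1 PSa) Pa).
by case: nPSa.
Qed.

Lemma ext0_nsupp a : ~ supp M a -> h0 a = 0%R.
Proof.
move=> nSa; rewrite /ext0; case: excluded_middle_informative => // PSa.
by case: nSa; apply: PSa.2.
Qed.

Lemma ext0_is_hom : is_hom h0.
Proof.
move=> x y f.
have [Sx | nSx] := classic (supp M x); last first.
  by rewrite (ext0_nsupp nSx) comp_lfun0l; apply: lfun_into_zero; apply: nsupp_vec0.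
have Px := supp_sub Sx; rewrite (ext0_supp Px Sx).
have [Sy | nSy] := classic (supp M y).
  by rewrite (ext0_supp (supp_sub Sy) Sy); exact: (@hom_h (exist P x Px) (exist P y _)).
rewrite (ext0_nsupp nSy) comp_lfun0r.
have [-> | nz_f] := eqVneq f 0%R; first by rewrite mact0 comp_lfun0r.
have Py := P_closed Sx nz_f.
have hy0 : h (exist P y Py) = 0%R by apply: lfun_into_zero; apply: nsupp_vec0.
by have := @hom_h (exist P x Px) (exist P y Py) f; rewrite hy0 comp_lfun0r.
Qed.

End ExtensionByZero.

Theorem lemma3p5 (K : closedFieldType) (R : KCat K) (X M : RMod R)
  (C : cobj R -> Prop) :
  locally_bounded R -> in_modR M ->
  (forall x, supp M x -> C x) ->
  let D := fun x : cobj R => exists c, C c /\ exists f : khom R c x, f != 0%R in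
  forall h : forall a : cobj (fullsub D),
      'Hom(mob (res D X) a, mob (res D M) a),
  is_hom h ->
  is_hom (@ext0 _ R D (supp M) X M h).
Proof.
move=> [_ local_ends _ _] _ supp_C D h hom_h.
apply: ext0_is_hom => // [x Sx | x y f Sx nz_f]; exists x; split; try exact: supp_C.
- by exists (kid R x); apply/eqP; apply: (local_ends x).1.
- by exists f.
Qed.
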